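(* In the Cross Model on $\mathbb{Z}_K$, for every configuration and all integers $K\ge1$, $n\ge0$, there exists a path of open edges from $(0,0)$ to $(n,0)$ of minimal length (among open paths in $\mathbb{Z}_K$) which uses only horizontal and diagonal edges, except possibly for vertical edges lying in the first column $\{0\}\times[\![-K,K]\!]$.
   Context: Cross Model: $\mathbb{Z}_K=\mathbb{Z}\times[\![-K,K]\!]$ with vertical edges $(i,j)\to(i,j+1)$, horizontal edges $(i,j)\to(i+1,j)$ and diagonal edges $(i,j)\to(i+1,j\pm1)$ (within the strip). Vertical and horizontal edges have length $1$, diagonal edges length $2$. All vertical and diagonal edges are open; each horizontal edge is open or closed (randomly, open with probability $1-\varepsilon$ independently). The length of a path is the sum of the lengths of its edges. *)

From Stdlib Require Import ZArith List.
Open Scope Z_scope.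

(* Vertices of Z_K = Z x [-K, K], as pairs (column i, row j). *)
Definition vertex := (Z * Z)%type.

Definition in_strip (K : Z) (v : vertex) : Prop := -K <= snd v <= K.

(* A configuration: [w i j = true] iff the horizontal edge
   (i,j) -- (i+1,j) is open.  (Values outside the strip are irrelevant.) *)
Definition config := Z -> Z -> bool.

Inductive edge_kind := Vert | Horiz | Diag.

Definition kind_len (k : edge_kind) : nat :=
  match k with Vert => 1%nat | Horiz => 1%nat | Diag => 2%nat end.

Definition open_edge (K : Z) (w : config) (u v : vertex) (k : edge_kind) : Prop :=
  in_strip K u /\ in_strip K v /\
  match k with
  | Vert => fst u = fst v /\ (snd v = snd u + 1 \/ snd u = snd v + 1)
  | Horiz => snd u = snd v /\
             ((fst v = fst u + 1 /\ w (fst u) (snd u) = true) \/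
              (fst u = fst v + 1 /\ w (fst v) (snd v) = true))
  | Diag => (fst v = fst u + 1 \/ fst u = fst v + 1) /\
            (snd v = snd u + 1 \/ snd u = snd v + 1)
  end.

Fixpoint is_path (K : Z) (w : config) (x : vertex)
    (s : list (edge_kind * vertex)) (y : vertex) : Prop :=
  match s with
  | nil => x = y
  | (k, v) :: s' => open_edge K w x v k /\ is_path K w v s' y
  end.

Fixpoint path_len (s : list (edge_kind * vertex)) : nat :=
  match s with
  | nil => 0%nat
  | (k, _) :: s' => (kind_len k + path_len s')%nat
  end.

Fixpoint vert_only_col0 (x : vertex) (s : list (edge_kind * vertex)) : Prop :=
  match s with
  | nil => True
  | (k, v) :: s' => (k = Vert -> fst x = 0) /\ vert_only_col0 v s'
  end.

(* Let [canon_dist i j] be the length of a shortest path to [(i, j)] that first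
   moves vertically in column 0 and then only steps forward along horizontal or
   diagonal edges; it obeys a one-column dynamic-programming recursion and is
   realised by such a path.  Extended by [canon_dist 0 j = |j|] to the columns
   [i < 0], it is a potential: it is 1-Lipschitz in the row and nondecreasing in
   the column, so along any open edge it grows by at most the length of the edge.
   Summing along an arbitrary open path from [(0,0)] to [(n,0)] shows that no
   such path is shorter than [canon_dist n 0]. *)
From Stdlib Require Import ZArith List Lia.
Open Scope Z_scope.

Lemma to_nat_succ_cases (a : Z) :
  (0 <= a /\ Z.to_nat (a + 1) = S (Z.to_nat a)) \/ Z.to_nat (a + 1) = Z.to_nat a.
Proof. destruct (Z_le_dec 0 a); [left | right]; lia. Qed.

Definition adj (j j' : Z) : Prop := j' = j + 1 \/ j = j' + 1.

Lemma adj_sym j j' : adj j j' -> adj j' j.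
Proof. unfold adj; lia. Qed.

(* The row neighbours used by the recursion; on the boundary of the strip the
   missing neighbour is replaced by the other one, which exists as [K >= 1]. *)
Definition row_down (K j : Z) : Z := if Z_le_dec (-K) (j - 1) then j - 1 else j + 1.
Definition row_up (K j : Z) : Z := if Z_le_dec (j + 1) K then j + 1 else j - 1.

Section Rows.

Variable K : Z.
Hypothesis K_ge1 : 1 <= K.

Lemma row_down_spec j : -K <= j <= K -> -K <= row_down K j <= K /\ adj j (row_down K j).
Proof. unfold row_down, adj; destruct Z_le_dec; lia. Qed.

Lemma row_up_spec j : -K <= j <= K -> -K <= row_up K j <= K /\ adj j (row_up K j).
Proof. unfold row_up, adj; destruct Z_le_dec; lia. Qed.

End Rows.

Lemma adj_row_down_or_up K j j' : -K <= j <= K -> -K <= j' <= K -> adj j j' ->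
  j = row_down K j' \/ j = row_up K j'.
Proof. unfold row_down, row_up, adj; destruct Z_le_dec, Z_le_dec; lia. Qed.

Fixpoint canon_dist (K : Z) (w : config) (i : nat) (j : Z) : Z :=
  match i with
  | O => Z.abs j
  | S i' =>
    let diag := Z.min (canon_dist K w i' (row_down K j))
                      (canon_dist K w i' (row_up K j)) + 2 in
    if w (Z.of_nat i') j then Z.min (canon_dist K w i' j + 1) diag else diag
  end.

Section CanonDist.

Variables (K : Z) (w : config).
Hypothesis K_ge1 : 1 <= K.

Notation g := (canon_dist K w).

Lemma canon_dist_succ_horiz i j : w (Z.of_nat i) j = true -> g (S i) j <= g i j + 1.
Proof. intros Hw; cbn [canon_dist]; rewrite Hw; lia. Qed.

Lemma canon_dist_succ_diag i j j' : -K <= j <= K -> -K <= j' <= K -> adj j j' ->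
  g (S i) j' <= g i j + 2.
Proof.
  intros Hj Hj' Hadj; cbn [canon_dist].
  destruct (adj_row_down_or_up K j j' Hj Hj' Hadj) as [-> | ->];
    destruct (w (Z.of_nat i) j'); lia.
Qed.

Lemma canon_dist_succ_lb_of_lip i j :
  (forall j j', -K <= j <= K -> -K <= j' <= K -> adj j j' -> g i j' <= g i j + 1) ->
  -K <= j <= K -> g i j + 1 <= g (S i) j.
Proof.
  intros Hlip Hj; cbn [canon_dist].
  destruct (row_down_spec K K_ge1 j Hj) as [Hd Hadj_d].
  destruct (row_up_spec K K_ge1 j Hj) as [Hu Hadj_u].
  pose proof (Hlip _ _ Hd Hj (adj_sym _ _ Hadj_d)).
  pose proof (Hlip _ _ Hu Hj (adj_sym _ _ Hadj_u)).
  destruct (w (Z.of_nat i) j); lia.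
Qed.

Lemma canon_dist_lip i j j' : -K <= j <= K -> -K <= j' <= K -> adj j j' ->
  g i j' <= g i j + 1.
Proof.
  revert j j'; induction i as [|i IH]; intros j j' Hj Hj' Hadj.
  - unfold adj in Hadj; cbn [canon_dist]; lia.
  - pose proof (canon_dist_succ_diag i j j' Hj Hj' Hadj).
    pose proof (canon_dist_succ_lb_of_lip i j IH Hj); lia.
Qed.

Lemma canon_dist_succ_lb i j : -K <= j <= K -> g i j + 1 <= g (S i) j.
Proof. apply canon_dist_succ_lb_of_lip; intros; apply canon_dist_lip; assumption. Qed.

Definition potential (v : vertex) : Z := g (Z.to_nat (fst v)) (snd v).

Lemma potential_open_edge u v k : open_edge K w u v k ->
  potential v <= potential u + Z.of_nat (kind_len k).
Proof.
  destruct u as [a b], v as [c d]; unfold open_edge, in_strip, potential; cbn [fst snd].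
  intros (Hb & Hd & He).
  destruct k; cbn [kind_len Z.of_nat Pos.of_succ_nat].
  - destruct He as [-> Hadj].
    pose proof (canon_dist_lip (Z.to_nat c) b d Hb Hd Hadj); lia.
  - destruct He as [-> [[-> Hw] | [-> _]]].
    + destruct (to_nat_succ_cases a) as [[Ha ->] | ->]; [|lia].
      rewrite <- (Z2Nat.id a Ha) in Hw.
      pose proof (canon_dist_succ_horiz (Z.to_nat a) d Hw); lia.
    + destruct (to_nat_succ_cases c) as [[_ ->] | ->]; [|lia].
      pose proof (canon_dist_succ_lb (Z.to_nat c) d Hd); lia.
  - destruct He as [[-> | ->] Hadj].
    + pose proof (canon_dist_lip (Z.to_nat a) b d Hb Hd Hadj).
      destruct (to_nat_succ_cases a) as [[_ ->] | ->]; [|lia].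
      pose proof (canon_dist_succ_diag (Z.to_nat a) b d Hb Hd Hadj); lia.
    + pose proof (canon_dist_lip (Z.to_nat c) b d Hb Hd Hadj).
      destruct (to_nat_succ_cases c) as [[_ ->] | ->]; [|lia].
      pose proof (canon_dist_succ_lb (Z.to_nat c) b Hb); lia.
Qed.

Lemma potential_path x s y : is_path K w x s y ->
  potential y <= potential x + Z.of_nat (path_len s).
Proof.
  revert x; induction s as [|[k v] s IH]; cbn [is_path path_len]; intros x Hs.
  - subst; lia.
  - destruct Hs as [He Hs].
    pose proof (potential_open_edge _ _ _ He); pose proof (IH _ Hs); lia.
Qed.

Definition canon_reachable (v : vertex) (l : Z) : Prop :=
  exists s, is_path K w (0, 0) s v /\ Z.of_nat (path_len s) = l /\ vert_only_col0 (0, 0) s.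

Lemma is_path_snoc x s y k v : is_path K w x s y -> open_edge K w y v k ->
  is_path K w x (s ++ (k, v) :: nil) v.
Proof.
  revert x; induction s as [|[k' v'] s IH]; cbn [is_path app]; intros x Hs He.
  - subst; tauto.
  - destruct Hs; split; auto.
Qed.

Lemma path_len_snoc s k v : path_len (s ++ (k, v) :: nil) = (path_len s + kind_len k)%nat.
Proof. induction s as [|[k' v'] s IH]; cbn [path_len app]; lia. Qed.

Lemma vert_only_col0_snoc x s y k v : is_path K w x s y -> vert_only_col0 x s ->
  (k = Vert -> fst y = 0) -> vert_only_col0 x (s ++ (k, v) :: nil).
Proof.
  revert x; induction s as [|[k' v'] s IH]; cbn [is_path vert_only_col0 app];
    intros x Hs Hv Hk.
  - subst; tauto.
  - destruct Hs, Hv; split; eauto.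
Qed.

Lemma canon_reachable_snoc y l v k : canon_reachable y l -> open_edge K w y v k ->
  (k = Vert -> fst y = 0) -> canon_reachable v (l + Z.of_nat (kind_len k)).
Proof.
  intros (s & Hs & Hl & Hv) He Hk.
  exists (s ++ (k, v) :: nil); split; [|split].
  - eapply is_path_snoc; eassumption.
  - rewrite path_len_snoc; lia.
  - eapply vert_only_col0_snoc; eassumption.
Qed.

Lemma canon_reachable_col0 (m : nat) j : -K <= j <= K -> Z.abs j = Z.of_nat m ->
  canon_reachable (0, j) (Z.of_nat m).
Proof.
  revert j; induction m as [|m IH]; intros j Hj Hm.
  - replace j with 0 by lia; exists nil; cbn; auto.
  - pose proof (Z.sgn_spec j).
    assert (Hprev : canon_reachable (0, j - Z.sgn j) (Z.of_nat m)) by (apply IH; lia).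
    replace (Z.of_nat (S m)) with (Z.of_nat m + Z.of_nat (kind_len Vert))
      by (cbn [kind_len]; lia).
    apply (canon_reachable_snoc _ _ _ _ Hprev); [|reflexivity].
    unfold open_edge, in_strip; cbn [fst snd]; lia.
Qed.

Lemma canon_reachable_canon_dist i j : -K <= j <= K ->
  canon_reachable (Z.of_nat i, j) (g i j).
Proof.
  revert j; induction i as [|i IH]; intros j Hj.
  - cbn [canon_dist Z.of_nat]; rewrite <- Nat2Z.inj_abs_nat.
    apply canon_reachable_col0; [exact Hj | symmetry; apply Nat2Z.inj_abs_nat].
  - assert (Hdiag : forall j', -K <= j' <= K -> adj j' j ->
              canon_reachable (Z.of_nat (S i), j) (g i j' + 2)).
    { intros j' Hj' Hadj.
      apply (canon_reachable_snoc _ _ _ Diag (IH j' Hj')); [|discriminate].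
      unfold open_edge, in_strip, adj in *; cbn [fst snd]; lia. }
    destruct (row_down_spec K K_ge1 j Hj) as [Hd Hadj_d].
    destruct (row_up_spec K K_ge1 j Hj) as [Hu Hadj_u].
    assert (Hmin : canon_reachable (Z.of_nat (S i), j)
              (Z.min (g i (row_down K j)) (g i (row_up K j)) + 2)).
    { rewrite <- Z.add_min_distr_r.
      apply Z.min_case; apply Hdiag; auto using adj_sym. }
    cbn [canon_dist]; destruct (w (Z.of_nat i) j) eqn:Hw; [|exact Hmin].
    apply Z.min_case; [|exact Hmin].
    apply (canon_reachable_snoc _ _ _ Horiz (IH j Hj)); [|discriminate].
    unfold open_edge, in_strip; cbn [fst snd]; split; [lia|split; [lia|]].
    split; [reflexivity|left; split; [lia|exact Hw]].
Qed.

End CanonDist.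

Theorem lemma3 (K n : Z) (w : config) :
  1 <= K -> 0 <= n ->
  exists s : list (edge_kind * vertex),
    is_path K w (0, 0) s (n, 0) /\
    (forall s' : list (edge_kind * vertex),
        is_path K w (0, 0) s' (n, 0) -> (path_len s <= path_len s')%nat) /\
    vert_only_col0 (0, 0) s.
Proof.
  intros HK Hn.
  destruct (canon_reachable_canon_dist K w HK (Z.to_nat n) 0 ltac:(lia))
    as (s & Hs & Hlen & Hvert).
  rewrite Z2Nat.id in Hs by exact Hn.
  exists s; split; [exact Hs | split; [|exact Hvert]].
  intros s' Hs'.
  pose proof (potential_path K w HK _ _ _ Hs') as Hpot.
  unfold potential in Hpot; cbn [fst snd] in Hpot.
  rewrite <- Hlen in Hpot; cbn in Hpot; lia.
Qed.
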